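(* Consider an asynchronous message-passing system of $n$ processes with reliable point-to-point channels between every pair of processes, in which up to $t$ processes may crash, with $n>2t$. For every integer $k > \frac{n-t}{n-2t}$, there exists an algorithm solving $k$-set agreement in this system.
   Context: $k$-set agreement (decisions allowed in $V\cup\{\bot\}$, $\bot$ counting as a decided value): each process proposes an initial value from a set $V$; (Validity) if all correct processes propose the same value $v$, no correct process decides a value different from $v$; (Agreement) at most $k$ distinct values are decided by correct processes; (Termination) every correct process eventually decides. A crashed process stops taking steps; a correct process never crashes. Asynchronous: messages sent between correct processes are eventually received, with no bound on delays. *)

From Stdlib Require Import List.
From mathcomp Require Import all_boot.
Set Implicit Arguments. Unset Strict Implicit. Unset Printing Implicit Defensive.

(* An atomic step of process p: given its
   current state and optionally one received message (sender, content), it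
   moves to a new state and sends a finite list of point-to-point messages
   (destination, content).  [decision s] is None while undecided; otherwise
   Some d with d : option V, where d = None encodes the special value bottom. *)
Record algorithm (n : nat) (V : Type) := Algorithm {
  St : Type;
  Msg : Type;
  init : 'I_n -> V -> St;
  step : 'I_n -> St -> option ('I_n * Msg) -> St * seq ('I_n * Msg);
  decision : St -> option (option V) }.
Arguments init {n V} a _ _.
Arguments step {n V} a _ _ _.
Arguments decision {n V} a _.

(* Time is an interleaving of atomic steps: at time t
   process [ev_p t] takes a step, receiving the message identified by
   [ev_r t] (a pair (t0, i) = the i-th message sent at time t0), or nothing. *)
Record run (n : nat) (V : Type) (A : algorithm n V)
    (prop : 'I_n -> V) (F : {set 'I_n}) := Run {
  ev_p : nat -> 'I_n;
  ev_r : nat -> option (nat * nat);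
  st : nat -> 'I_n -> St A;
  out : nat -> seq ('I_n * Msg A);
  rcvd : nat -> option ('I_n * Msg A);
  run_init : forall p, st 0 p = init A p (prop p);
  run_step : forall tm, step A (ev_p tm) (st tm (ev_p tm)) (rcvd tm)
                        = (st tm.+1 (ev_p tm), out tm);
  run_frame : forall tm q, q != ev_p tm -> st tm.+1 q = st tm q;
  run_none : forall tm, ev_r tm = None -> rcvd tm = None;
  run_recv : forall tm t0 i, ev_r tm = Some (t0, i) ->
     (t0 < tm)%N /\ exists m, onth (out t0) i = Some (ev_p tm, m)
                             /\ rcvd tm = Some (ev_p t0, m);
  run_nodup : forall tm tm' id, ev_r tm = Some id -> ev_r tm' = Some id -> tm = tm';
  run_crash : forall p, p \in F -> exists T, forall tm, (T <= tm)%N -> ev_p tm != p;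
  run_correct : forall p, p \notin F -> forall T, exists tm, (T <= tm)%N /\ ev_p tm = p;
  run_reliable : forall t0 i q m, onth (out t0) i = Some (q, m) ->
     ev_p t0 \notin F -> q \notin F -> exists tm, ev_r tm = Some (t0, i) }.

(* Process p decides d in run r: d is the first decision value it outputs
   (decisions are irrevocable: only the first one counts). *)
Definition decides n V (A : algorithm n V) prop F (r : run A prop F)
    (p : 'I_n) (d : option V) : Prop :=
  exists T, decision A (st r T p) = Some d /\
            forall T', (T' < T)%N -> decision A (st r T' p) = None.

(* A solves k-set agreement in the system where up to tt processes may crash
   (decided values range over V ∪ {bottom}, bottom counting as a value). *)
Definition solves_kset n V (A : algorithm n V) (tt k : nat) : Prop :=
  forall (prop : 'I_n -> V) (F : {set 'I_n}), (#|F| <= tt)%N ->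
  forall r : run A prop F,
    (forall v : V, (forall p, p \notin F -> prop p = v) ->
       forall p d, p \notin F -> decides r p d -> d = Some v) /\
    (exists L : seq (option V), (size L <= k)%N /\
       forall p d, p \notin F -> decides r p d -> In d L) /\
    (forall p, p \notin F -> exists d, decides r p d).

(* Each process broadcasts its proposal; once it has heard n - t proposals it
   broadcasts this view; once it has received n - t views it decides its own
   proposal if at most t of the proposals appearing in these views differ from
   it, and bottom otherwise.  A differing proposal comes from a faulty process,
   which gives validity.  Since n > 2t, any two sets of n - t views share a
   sender, and a process sends only one view.  Hence if p decides w and p1
   decides w1 <> w, this common view contains n - 2t processes proposing w, all
   counted by p1 among its at most t dissenters from w1.  So at most
   t / (n - 2t) < k - 1 values other than w1 and bottom are decided. *)
From Stdlib Require Import List ClassicalEpsilon.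
From mathcomp Require Import all_boot zify.
Set Implicit Arguments. Unset Strict Implicit. Unset Printing Implicit Defensive.

(* Messages carry values of an arbitrary type [V], so list membership is
   [List.In]; MathComp's [cat], [map], [filter], [flatten] and [has] are
   convertible to their [List] counterparts. *)
Lemma In_cat {T} (x : T) (s1 s2 : seq T) : In x (s1 ++ s2) <-> In x s1 \/ In x s2.
Proof. exact: in_app_iff. Qed.

Lemma In_map {T U} (f : T -> U) x (s : seq T) : In x s -> In (f x) (map f s).
Proof. exact: in_map. Qed.

Lemma In_filter {T} (a : pred T) x (s : seq T) : In x (filter a s) <-> In x s /\ a x.
Proof. exact: filter_In. Qed.

Lemma In_flatten {T} (x : T) (ss : seq (seq T)) :
  In x (flatten ss) <-> exists s, In s ss /\ In x s.
Proof. exact: in_concat. Qed.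

Lemma has_In {T} (a : pred T) (s : seq T) : has a s <-> exists x, In x s /\ a x.
Proof. exact: existsb_exists. Qed.

Lemma mem_In {T : eqType} (x : T) s : x \in s -> In x s.
Proof. by elim: s => [|y s IH] //=; rewrite inE => /orP [/eqP ->|/IH]; auto. Qed.

Lemma onth_In {T} (s : seq T) i x : onth s i = Some x -> In x s.
Proof. by elim: s i => [|y s IH] [|i] //= => [[->]|/IH]; auto. Qed.

Lemma In_onth {T} (s : seq T) x : In x s -> exists i, onth s i = Some x.
Proof. by elim: s => [|y s IH] //= [->|/IH [i hi]]; [exists 0 | exists i.+1]. Qed.

Definition classic_eqb {X : Type} (a b : X) : bool :=
  if excluded_middle_informative (a = b) then true else false.

Lemma classic_eqbP {X : Type} (a b : X) : reflect (a = b) (classic_eqb a b).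
Proof. by rewrite /classic_eqb; case: excluded_middle_informative; constructor. Qed.

Lemma eventually_forall (T : finType) (P : pred T) (Q : T -> nat -> Prop) :
  (forall q tm tm', tm <= tm' -> Q q tm -> Q q tm') ->
  (forall q, P q -> exists tm, Q q tm) -> exists tm, forall q, P q -> Q q tm.
Proof.
move=> Qmono Qex.
suff [tm Htm] : exists tm, forall q, q \in enum T -> P q -> Q q tm.
  by exists tm => q; apply: Htm; rewrite mem_enum.
elim: (enum T) => [|a s [tm IH]]; first by exists 0.
case Pa: (P a); last first.
  by exists tm => q; rewrite inE => /orP [/eqP -> | /IH //]; rewrite Pa.
have [tma Ha] := Qex a Pa; exists (maxn tm tma) => q; rewrite inE => /orP [/eqP -> _|qs Pq].
- exact: Qmono (leq_maxr _ _) Ha.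
- exact: Qmono (leq_maxl _ _) (IH q qs Pq).
Qed.

Lemma subn_le_cardsI (T : finType) (A B : {set T}) a b :
  a <= #|A| -> #|A :\: B| <= b -> a - b <= #|A :&: B|.
Proof. by have := cardsID B A; lia. Qed.

Section Fibers.
Variables (T : finType) (X : Type) (f : T -> X).

Definition fiber (D : {set T}) (x : X) : {set T} := [set q in D | classic_eqb (f q) x].

(* Removing a heavy fiber leaves every other fiber intact, so induct on #|D|. *)
Lemma few_heavy_fibers (m : nat) (D : {set T}) : 0 < m ->
  exists L : seq X, size L * m <= #|D| /\ forall x, m <= #|fiber D x| -> In x L.
Proof.
move=> m_gt0; have [N] := ubnP #|D|; elim: N D => // N IH D ltDN.
have [/existsP [q /andP [qD heavy_q]] | no_heavy] :=
  boolP [exists q in D, m <= #|fiber D (f q)|]; last first.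
  exists [::]; split => // x heavy_x.
  have [q] : exists q, q \in fiber D x.
    by apply/set0Pn; rewrite -card_gt0; apply: leq_trans heavy_x.
  rewrite inE => /andP [qD /classic_eqbP fqx].
  by move/existsP: no_heavy; case; exists q; rewrite qD fqx.
set D' := D :\: fiber D (f q).
have fib_sub : fiber D (f q) \subset D by apply/subsetP => y; rewrite inE => /andP [].
have cardD : #|D'| + #|fiber D (f q)| = #|D|.
  by rewrite cardsD (setIidPr fib_sub) subnK // subset_leq_card.
have [L [sizeL inL]] := IH D' ltac:(lia).
exists (f q :: L); split; first by rewrite /= mulSn; lia.
move=> x heavy_x; case: (classic_eqbP x (f q)) => [-> | neq]; first by left.
right; apply: inL; suff -> : fiber D' x = fiber D x by [].
apply/setP => y; rewrite !inE; case: (classic_eqbP (f y) x) => [fyx|]; last by rewrite !andbF.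
by rewrite fyx (introF (classic_eqbP x (f q)) neq) andbF.
Qed.

End Fibers.

Section Algorithm.
Variables (n t : nat) (V : Type).

Inductive msg := Proposal of V | View of seq ('I_n * V).

Record state := State {
  input : V; started : bool; heard : seq ('I_n * V);
  reported : bool; views : seq ('I_n * seq ('I_n * V)) }.

Definition senders {X} (l : seq ('I_n * X)) : {set 'I_n} :=
  [set q | has (fun e => e.1 == q) l].

Definition dissenters (u : V) (U : seq ('I_n * V)) : {set 'I_n} :=
  senders [seq e <- U | ~~ classic_eqb e.2 u].

Definition known (s : state) : seq ('I_n * V) := flatten (map snd (views s)).

Definition broadcast (c : msg) : seq ('I_n * msg) := [seq (q, c) | q <- enum 'I_n].

Definition kset_init (_ : 'I_n) (v : V) : state := State v false [::] false [::].

Definition kset_step (_ : 'I_n) (s : state) (m : option ('I_n * msg)) :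
    state * seq ('I_n * msg) :=
  let hs := if m is Some (j, Proposal v) then (j, v) :: heard s else heard s in
  let vs := if m is Some (j, View l) then (j, l) :: views s else views s in
  let report := ~~ reported s && (n - t <= #|senders hs|) in
  (State (input s) true hs (reported s || report) vs,
   (if started s then [::] else broadcast (Proposal (input s))) ++
   (if report then broadcast (View hs) else [::])).

Definition kset_decision (s : state) : option (option V) :=
  if n - t <= #|senders (views s)| then
    Some (if #|dissenters (input s) (known s)| <= t then Some (input s) else None)
  else None.

Definition kset_alg : algorithm n V := Algorithm kset_init kset_step kset_decision.

Lemma in_senders {X} (l : seq ('I_n * X)) q : q \in senders l <-> exists x, In (q, x) l.
Proof.
rewrite inE has_In; split => [[[q' x] [lx /eqP /= <-]]|[x lx]]; first by exists x.
by exists (q, x); rewrite /= eqxx.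
Qed.

Lemma senders_incl {X} (l l' : seq ('I_n * X)) : incl l l' -> senders l \subset senders l'.
Proof. by move=> ll'; apply/subsetP => q /in_senders [x /ll' lx]; apply/in_senders; exists x. Qed.

Lemma in_dissenters u U q : q \in dissenters u U <-> exists v, In (q, v) U /\ v <> u.
Proof.
rewrite in_senders; split => [[v /In_filter [Uv /classic_eqbP]]|[v [Uv vu]]]; first by exists v.
by exists v; apply/In_filter; split => //; apply/classic_eqbP.
Qed.

Lemma dissenters_incl u U U' : incl U U' -> dissenters u U \subset dissenters u U'.
Proof.
move=> UU'; apply/subsetP => q /in_dissenters [v [/UU' Uv vu]].
by apply/in_dissenters; exists v.
Qed.

Lemma In_known s e : In e (known s) <-> exists j l, In (j, l) (views s) /\ In e l.
Proof.
rewrite /known In_flatten; split => [[l [/in_map_iff [[j l'] [/= <- jl]] el]]|[j [l [jl el]]]].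
  by exists j, l'.
by exists l; split => //; apply: (In_map snd jl).
Qed.

Lemma In_broadcast q c : In (q, c) (broadcast c).
Proof. by apply: (In_map (fun q => (q, c))); apply: mem_In; rewrite mem_enum. Qed.

Lemma In_broadcast_msg q c c' : In (q, c') (broadcast c) -> c' = c.
Proof. by case/in_map_iff => x [[_ ->]]. Qed.

Lemma step_heard p s m : incl (heard s) (heard (kset_step p s m).1).
Proof. by case: m => [[j [v|l]]|] //= e; right. Qed.

Lemma step_views p s m : incl (views s) (views (kset_step p s m).1).
Proof. by case: m => [[j [v|l]]|] //= e; right. Qed.

Lemma step_keeps_reported p s m : reported s -> reported (kset_step p s m).1.
Proof. by rewrite /= => ->. Qed.

Lemma step_reports p s m :
  n - t <= #|senders (heard (kset_step p s m).1)| -> reported (kset_step p s m).1.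
Proof. by rewrite /= => ->; rewrite andbT orbN. Qed.

Lemma step_Proposal p s m q v : In (q, Proposal v) (kset_step p s m).2 -> v = input s.
Proof.
case/In_cat; first by case: started => //= /In_broadcast_msg [].
by case: ifP => //= _ /In_broadcast_msg.
Qed.

Lemma step_View p s m q l : In (q, View l) (kset_step p s m).2 ->
  [/\ l = heard (kset_step p s m).1, n - t <= #|senders l|,
      ~~ reported s & reported (kset_step p s m).1].
Proof.
case/In_cat; first by case: started => //= /In_broadcast_msg.
case: ifP => [/andP [nrep quorum]|] //= /In_broadcast_msg [->].
by rewrite quorum nrep orbT.
Qed.

Lemma step_broadcasts_Proposal p s m q :
  ~~ started s -> In (q, Proposal (input s)) (kset_step p s m).2.
Proof. by move/negbTE => /= ->; apply/In_cat; left; apply: In_broadcast. Qed.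

Lemma step_broadcasts_View p s m q : ~~ reported s -> reported (kset_step p s m).1 ->
  In (q, View (heard (kset_step p s m).1)) (kset_step p s m).2.
Proof. by move/negbTE => /= -> /= ->; apply/In_cat; right; apply: In_broadcast. Qed.

Lemma decision_Some s d : kset_decision s = Some d ->
  n - t <= #|senders (views s)| /\
  d = if #|dissenters (input s) (known s)| <= t then Some (input s) else None.
Proof. by rewrite /kset_decision; case: ifP => // quorum [<-]. Qed.

Lemma decision_Some_Some s w : kset_decision s = Some (Some w) ->
  [/\ n - t <= #|senders (views s)|, w = input s & #|dissenters w (known s)| <= t].
Proof. by case/decision_Some => quorum; case: ifP => // few [->]. Qed.

End Algorithm.

Arguments Proposal {n V} _.
Arguments View {n V} _.

Section Run.
Variables (n t : nat) (V : Type) (prop : 'I_n -> V) (F : {set 'I_n}).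
Variable r : run (kset_alg n t V) prop F.

Definition state_at tm p : state n V := st r tm p.

Lemma state_at_step tm : state_at tm.+1 (ev_p r tm) =
  (kset_step t (ev_p r tm) (state_at tm (ev_p r tm)) (rcvd r tm)).1.
Proof. exact: esym (f_equal fst (run_step r tm)). Qed.

Lemma out_step tm :
  out r tm = (kset_step t (ev_p r tm) (state_at tm (ev_p r tm)) (rcvd r tm)).2.
Proof. exact: esym (f_equal snd (run_step r tm)). Qed.

Lemma state_at_ind (P : 'I_n -> state n V -> Prop) :
  (forall p, P p (kset_init p (prop p))) ->
  (forall tm, P (ev_p r tm) (state_at tm (ev_p r tm)) ->
              P (ev_p r tm) (state_at tm.+1 (ev_p r tm))) ->
  forall tm p, P p (state_at tm p).
Proof.
move=> P0 Pstep; elim=> [|tm IH] p; first by rewrite /state_at run_init.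
have [-> | ne] := eqVneq p (ev_p r tm); first exact: Pstep.
by rewrite /state_at run_frame.
Qed.

Lemma state_at_mono (R : state n V -> state n V -> Prop) :
  (forall s, R s s) -> (forall s1 s2 s3, R s1 s2 -> R s2 s3 -> R s1 s3) ->
  (forall p s m, R s (kset_step t p s m).1) ->
  forall q tm tm', tm <= tm' -> R (state_at tm q) (state_at tm' q).
Proof.
move=> Rrefl Rtrans Rstep q tm tm' /subnK <-; elim: (tm' - tm) => // d IH.
apply: Rtrans IH _; rewrite addSn.
have [-> | ne] := eqVneq q (ev_p r (d + tm)); first by rewrite state_at_step.
by rewrite /state_at run_frame.
Qed.

Lemma heard_mono q tm tm' : tm <= tm' ->
  senders (heard (state_at tm q)) \subset senders (heard (state_at tm' q)).
Proof.
apply: (state_at_mono (R := fun s1 s2 => senders (heard s1) \subset senders (heard s2))).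
- by move=> s; apply: subxx.
- by move=> s1 s2 s3; apply: subset_trans.
- by move=> p s m; apply/senders_incl/step_heard.
Qed.

Lemma views_mono q tm tm' : tm <= tm' ->
  senders (views (state_at tm q)) \subset senders (views (state_at tm' q)).
Proof.
apply: (state_at_mono (R := fun s1 s2 => senders (views s1) \subset senders (views s2))).
- by move=> s; apply: subxx.
- by move=> s1 s2 s3; apply: subset_trans.
- by move=> p s m; apply/senders_incl/step_views.
Qed.

Lemma reported_mono q tm tm' : tm <= tm' ->
  reported (state_at tm q) -> reported (state_at tm' q).
Proof.
apply: (state_at_mono (R := fun s1 s2 => reported s1 -> reported s2)) => //.
- by move=> s1 s2 s3 h12 h23 /h12 /h23.
- by move=> p s m /step_keeps_reported.
Qed.

Lemma switch_step (f : state n V -> bool) q tm :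
  f (state_at 0 q) = false -> f (state_at tm q) = true ->
  exists t0, [/\ ev_p r t0 = q, f (state_at t0 q) = false & f (state_at t0.+1 q) = true].
Proof.
move=> f0; elim: tm => [|tm IH]; first by rewrite f0.
case ftm: (f (state_at tm q)) => ftm1; first exact: IH.
exists tm; split => //; apply/eqP; apply: contraT => ne.
by move: ftm1; rewrite /state_at run_frame 1?eq_sym // -/(state_at tm q) ftm.
Qed.

Lemma rcvd_sent tm j c : rcvd r tm = Some (j, c) ->
  exists t0, ev_p r t0 = j /\ In (ev_p r tm, c) (out r t0).
Proof.
case e: (ev_r r tm) => [[t0 i]|]; last by rewrite run_none.
have [_ [m [out_i ->]]] := run_recv e; case=> <- <-.
by exists t0; split => //; apply: onth_In out_i.
Qed.

Lemma reliable_delivery t0 p c : In (p, c) (out r t0) -> ev_p r t0 \notin F -> p \notin F ->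
  exists tm, ev_p r tm = p /\ rcvd r tm = Some (ev_p r t0, c).
Proof.
move=> sent sender_ok p_ok; have [i out_i] := In_onth sent.
have [tm e] := run_reliable out_i sender_ok p_ok.
have [_ [m [out_i' rcv]]] := run_recv e.
by move: out_i' rcv; rewrite out_i => -[-> <-] rcv; exists tm.
Qed.

Lemma input_state_at tm p : input (state_at tm p) = prop p.
Proof.
by apply: (state_at_ind (P := fun p s => input s = prop p)) => // tm'; rewrite state_at_step.
Qed.

Lemma sent_Proposal tm q v : In (q, Proposal v) (out r tm) -> v = prop (ev_p r tm).
Proof. by rewrite out_step => sent; rewrite (step_Proposal sent) input_state_at. Qed.

Definition faithful (l : seq ('I_n * V)) := forall e, In e l -> e.2 = prop e.1.

Lemma heard_faithful tm p : faithful (heard (state_at tm p)).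
Proof.
apply: (state_at_ind (P := fun p s => faithful (heard s))) => [p' e [] | tm'].
rewrite state_at_step /=; case e: (rcvd r tm') => [[j [v|l]]|] //= fhs x [<-|]; auto.
by have [t0 [<- /sent_Proposal]] := rcvd_sent e.
Qed.

Definition valid_view (l : seq ('I_n * V)) := faithful l /\ n - t <= #|senders l|.

Lemma sent_View_at tm q l : In (q, View l) (out r tm) ->
  [/\ l = heard (state_at tm.+1 (ev_p r tm)), n - t <= #|senders l|,
      ~~ reported (state_at tm (ev_p r tm)) & reported (state_at tm.+1 (ev_p r tm))].
Proof. by rewrite out_step state_at_step => sent; apply: step_View sent. Qed.

Lemma sent_View tm q l : In (q, View l) (out r tm) -> valid_view l.
Proof. by case/sent_View_at => -> quorum _ _; split => //; apply: heard_faithful. Qed.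

Definition reported_by j l := exists tm q, ev_p r tm = j /\ In (q, View l) (out r tm).

Lemma views_reported tm p j l : In (j, l) (views (state_at tm p)) -> reported_by j l.
Proof.
move: j l; apply: (state_at_ind
  (P := fun p s => forall j l, In (j, l) (views s) -> reported_by j l)) => [p' j l [] | tm'].
rewrite state_at_step /=; case e: (rcvd r tm') => [[i [v|l']]|] //= IH j l [|]; auto.
by case=> <- <-; have [t0 [<- sent]] := rcvd_sent e; exists t0, (ev_p r tm').
Qed.

Lemma views_valid tm p j l : In (j, l) (views (state_at tm p)) -> valid_view l.
Proof. by case/views_reported => t0 [q [_ /sent_View]]. Qed.

Lemma sends_View_once a b q q' l l' : ev_p r a = ev_p r b -> a < b ->
  In (q, View l) (out r a) -> In (q', View l') (out r b) -> False.
Proof.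
move=> same ab /sent_View_at [_ _ _ rep] /sent_View_at [_ _ nrep _].
by move: nrep; rewrite -same (reported_mono ab rep).
Qed.

Lemma reported_by_unique j l l' : reported_by j l -> reported_by j l' -> l = l'.
Proof.
move=> [a [q [<- sa]]] [b [q' [same sb]]].
case: (ltngtP a b) => [ab|ba|ab].
- by case: (sends_View_once (esym same) ab sa sb).
- by case: (sends_View_once same ba sb sa).
- by move: sb; rewrite -ab => /sent_View_at [-> _ _ _]; case/sent_View_at: sa => ->.
Qed.

Lemma known_faithful tm p : faithful (known (state_at tm p)).
Proof. by move=> e /In_known [j [l [jl le]]]; have [fl _] := views_valid jl; apply: fl. Qed.

Lemma dissentersE u U : faithful U ->
  dissenters u U = [set q in senders U | ~~ classic_eqb (prop q) u].
Proof.
move=> fU; apply/setP => q; rewrite inE; apply/idP/andP.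
- case/in_dissenters => v [Uv vu]; have /= vq := fU _ Uv.
  by split; [apply/in_senders; exists v | rewrite -vq; apply/classic_eqbP].
- case=> /in_senders [v Uv] /classic_eqbP qu; have /= vq := fU _ Uv.
  by apply/in_dissenters; exists v; split => //; rewrite vq.
Qed.

Lemma correct_quorum (X : {set 'I_n}) : #|F| <= t ->
  (forall q, q \notin F -> q \in X) -> n - t <= #|X|.
Proof.
move=> Ft correctX; have : ~: F \subset X by apply/subsetP => q; rewrite inE; apply: correctX.
move/subset_leq_card; have := cardsC F; rewrite card_ord; lia.
Qed.

Lemma quorums_meet (A B : {set 'I_n}) : 2 * t < n ->
  n - t <= #|A| -> n - t <= #|B| -> exists q, q \in A :&: B.
Proof.
move=> tn An Bn; apply/set0Pn; rewrite -card_gt0.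
have := cardsUI A B; have := max_card (A :|: B); rewrite card_ord; lia.
Qed.

Lemma validity_run v : #|F| <= t -> (forall q, q \notin F -> prop q = v) ->
  forall p d, p \notin F -> decides r p d -> d = Some v.
Proof.
move=> Ft unanimous p d p_ok [T [/decision_Some [_ ->] _]].
rewrite input_state_at unanimous // dissentersE; last exact: known_faithful.
suff -> : #|[set q in senders (known (state_at T p)) | ~~ classic_eqb (prop q) v]| <= t by [].
apply: leq_trans Ft; apply/subset_leq_card/subsetP => q; rewrite inE => /andP [_].
by apply: contraR => q_ok; rewrite unanimous //; apply/classic_eqbP.
Qed.

Lemma common_view T p T1 p1 : 2 * t < n ->
  n - t <= #|senders (views (state_at T p))| -> n - t <= #|senders (views (state_at T1 p1))| ->
  exists j l, In (j, l) (views (state_at T p)) /\ In (j, l) (views (state_at T1 p1)).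
Proof.
move=> tn quorum quorum1; have [j] := quorums_meet tn quorum quorum1.
rewrite inE => /andP [/in_senders [l jl] /in_senders [l' jl']].
have el := reported_by_unique (views_reported jl) (views_reported jl').
by exists j, l; rewrite {2}el.
Qed.

Lemma view_supporters l U w : valid_view l -> incl l U -> #|dissenters w U| <= t ->
  n - 2 * t <= #|fiber prop (senders l) w|.
Proof.
move=> [fl quorum] lU few.
have few_l : #|dissenters w l| <= t.
  by apply: leq_trans few; apply/subset_leq_card/dissenters_incl.
set B := [set q | classic_eqb (prop q) w].
have -> : fiber prop (senders l) w = senders l :&: B by apply/setP => q; rewrite !inE.
have dissE : dissenters w l = senders l :\: B.
  by rewrite dissentersE //; apply/setP => q; rewrite !inE andbC.
rewrite dissE in few_l; rewrite (_ : n - 2 * t = n - t - t); last by lia.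
exact: subn_le_cardsI quorum few_l.
Qed.

Lemma supporters_dissent l U1 w w1 : faithful l -> incl l U1 -> w <> w1 ->
  fiber prop (senders l) w \subset fiber prop (dissenters w1 U1) w.
Proof.
move=> fl lU1 ww1; apply/subsetP => q /setIdP [/in_senders [v lv] qw].
apply/setIdP; split => //; apply/in_dissenters; exists v; split; first exact: lU1.
by have /= -> := fl _ lv; move/classic_eqbP: qw => ->.
Qed.

Lemma decided_value_heavy T p T1 p1 w w1 : 2 * t < n ->
  kset_decision t (state_at T p) = Some (Some w) ->
  kset_decision t (state_at T1 p1) = Some (Some w1) -> w <> w1 ->
  n - 2 * t <= #|fiber prop (dissenters w1 (known (state_at T1 p1))) w|.
Proof.
move=> tn dec dec1 ww1.
have [quorum _ few] := decision_Some_Some dec.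
have [quorum1 _ _] := decision_Some_Some dec1.
have [j [l [jl jl1]]] := common_view tn quorum quorum1.
have [fl _] := views_valid jl.
have in_known T' p' : In (j, l) (views (state_at T' p')) -> incl l (known (state_at T' p')).
  by move=> jl' e le; apply/In_known; exists j, l.
apply: leq_trans (view_supporters (views_valid jl) (in_known _ _ jl) few) _.
exact: subset_leq_card (supporters_dissent fl (in_known _ _ jl1) ww1).
Qed.

Lemma agreement_run k : 2 * t < n -> n - t < k * (n - 2 * t) ->
  exists L : seq (option V), size L <= k /\
    forall p d, p \notin F -> decides r p d -> In d L.
Proof.
move=> tn tk; have k_gt0 : 0 < k by case: k tk.
have [[T1 [p1 [w1 dec1]]] | no_value] :=
  classic (exists T1 p1 w1, kset_decision t (state_at T1 p1) = Some (Some w1)); last first.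
  exists [:: None]; split => // p [w|] _ [T [dec _]]; [case: no_value | by left].
  by exists T, p, w.
have [_ _ few1] := decision_Some_Some dec1.
have [L [sizeL heavyL]] :=
  few_heavy_fibers prop (dissenters w1 (known (state_at T1 p1))) (ltac:(lia) : 0 < n - 2 * t).
exists (None :: Some w1 :: map Some L); split.
  have : size L * (n - 2 * t) <= t := leq_trans sizeL few1.
  rewrite /= size_map; move: tk; set m := n - 2 * t; have -> : n - t = m + t by lia.
  by nia.
move=> p [w|] _ [T [dec _]]; last by left.
have [<- | ww1] := classic (w = w1); first by right; left.
by right; right; apply/In_map/heavyL/(decided_value_heavy tn dec dec1 ww1).
Qed.

Lemma broadcasts_proposal q : q \notin F ->
  exists t0, ev_p r t0 = q /\ forall p, In (p, Proposal (prop q)) (out r t0).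
Proof.
move=> q_ok; have [tm [_ step_q]] := run_correct r q_ok 0.
have started0 : started (state_at 0 q) = false by rewrite /state_at run_init.
have started1 : started (state_at tm.+1 q) = true by rewrite -step_q state_at_step.
have [t0 [step0 idle _]] := switch_step started0 started1.
exists t0; split => // p; rewrite out_step step0 -(input_state_at t0 q).
by apply: step_broadcasts_Proposal; rewrite idle.
Qed.

Lemma eventually_heard p : p \notin F ->
  exists T, forall q, q \notin F -> q \in senders (heard (state_at T p)).
Proof.
move=> p_ok; apply: eventually_forall => [q tm tm' le /(subsetP (heard_mono p le)) //|q q_ok].
have [t0 [sender bcast]] := broadcasts_proposal q_ok.
have [tm [<- rcv]] := reliable_delivery (bcast p) ltac:(by rewrite sender) p_ok.
by exists tm.+1; rewrite state_at_step rcv sender; apply/in_senders; exists (prop q); left.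
Qed.

Lemma broadcasts_view j : #|F| <= t -> j \notin F ->
  exists t0 l, ev_p r t0 = j /\ forall p, In (p, View l) (out r t0).
Proof.
move=> Ft j_ok; have [T heardT] := eventually_heard j_ok.
have [tm [leT step_j]] := run_correct r j_ok T.
have reported0 : reported (state_at 0 j) = false by rewrite /state_at run_init.
have reported1 : reported (state_at tm.+1 j) = true.
  have quorum : n - t <= #|senders (heard (state_at tm.+1 j))|.
    exact: leq_trans (correct_quorum Ft heardT) (subset_leq_card (heard_mono j (leqW leT))).
  by move: quorum; rewrite -step_j state_at_step; apply: step_reports.
have [t0 [step0 idle rep]] := switch_step reported0 reported1.
exists t0, (heard (state_at t0.+1 j)); split => // p.
move: idle rep; rewrite out_step -step0 state_at_step => idle rep.
by apply: step_broadcasts_View; rewrite ?idle.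
Qed.

Lemma eventually_views p : #|F| <= t -> p \notin F ->
  exists T, forall q, q \notin F -> q \in senders (views (state_at T p)).
Proof.
move=> Ft p_ok; apply: eventually_forall => [q tm tm' le /(subsetP (views_mono p le)) //|q q_ok].
have [t0 [l [sender bcast]]] := broadcasts_view Ft q_ok.
have [tm [<- rcv]] := reliable_delivery (bcast p) ltac:(by rewrite sender) p_ok.
by exists tm.+1; rewrite state_at_step rcv sender; apply/in_senders; exists l; left.
Qed.

Lemma termination_run p : #|F| <= t -> p \notin F -> exists d, decides r p d.
Proof.
move=> Ft p_ok; have [T viewsT] := eventually_views Ft p_ok.
have decided : exists T, isSome (kset_decision t (state_at T p)).
  by exists T; rewrite /kset_decision (correct_quorum Ft viewsT).
case: (ex_minnP decided) => T0; case dec: (kset_decision t (state_at T0 p)) => [d|] // _ first.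
exists d, T0; split => // T' ltT'; case dec': (kset_decision t (state_at T' p)) => [d'|] //.
by have := first T'; rewrite dec' leqNgt ltT' => /(_ isT).
Qed.

End Run.

Theorem theorem8 (n t k : nat) (V : Type) :
  (2 * t < n)%N -> (n - t < k * (n - 2 * t))%N ->
  exists A : algorithm n V, solves_kset A t k.
Proof.
move=> tn tk; exists (kset_alg n t V) => prop F Ft r; split; [|split].
- by move=> v unanimous p d p_ok; apply: validity_run.
- exact: agreement_run.
- by move=> p p_ok; apply: termination_run.
Qed.
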